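(* Let $\Gamma$ be a finite nilpotent group of order $n=\prod_{p\mid n}p^{v_p}$, and for each prime $p\mid n$ let $\Gamma_p$ denote the Sylow $p$-subgroup of $\Gamma$. Then for every nilpotent group $G$ of order $n$, with Sylow $p$-subgroups $G_p$, we have $$e(\Gamma,G)=\prod_{p\mid n} e(\Gamma_p,G_p).$$
   Context: For finite groups $\Gamma$ and $G$ of the same order, $e(\Gamma,G)$ denotes the number of Hopf-Galois structures of type $G$ on a Galois field extension $L/K$ with $\mathrm{Gal}(L/K)\cong\Gamma$. Here a Hopf-Galois structure given by a $K$-Hopf algebra $H$ has type $G$ if $L\otimes_K H\cong L[G]$ for the corresponding regular permutation group $G$ on $\Gamma$ (Greither–Pareigis). Equivalently (and this is the working definition), $e(\Gamma,G)$ is the number of equivalence classes of regular embeddings $\beta:\Gamma\to\mathrm{Hol}(G)$, where $\mathrm{Hol}(G)=\rho(G)\cdot\mathrm{Aut}(G)\subseteq \mathrm{Perm}(G)$ is the holomorph of $G$ with $\rho(g)(x)=xg^{-1}$, a regular embedding is an injective homomorphism whose image acts regularly (simply transitively) on $G$, and two regular embeddings are equivalent if they are conjugate by an element of $\mathrm{Aut}(G)$. A finite group is nilpotent iff it is the direct product of its Sylow subgroups. *)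

From mathcomp Require Import all_boot all_fingroup all_solvable.
Set Implicit Arguments. Unset Strict Implicit. Unset Printing Implicit Defensive.
Import GroupScope.
Local Open Scope group_scope.

Section Hopf.
Variables (gT hT : finGroupType).

(* Right translation rho(g) : x |-> x g^-1 on B, restricted as a permutation
   of hT that fixes every point outside B. *)
(* Hol(B) = rho(B) . Aut(B), realised inside Perm(B) viewed as the permutations
   of hT that fix every point outside B. *)
Definition Hol (B : {set hT}) : {set {perm hT}} :=
  [set p : {perm hT} | [forall x in ~: B, p x == x] &&
     [exists g in B, exists s in Aut B, [forall x in B, p x == s (x * g^-1)]]].

(* A homomorphism beta : A -> Hol(B) is encoded as a finite function,
   trivial (= 1) outside A (the usual mathcomp convention for morphisms). *)
Definition regular_embedding (A : {set gT}) (B : {set hT})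
    (f : {ffun gT -> {perm hT}}) : bool :=
  [&& [forall a in ~: A, f a == 1],
      [forall a in A, forall b in A, f (a * b) == f a * f b],
      [forall a in A, forall b in A, (f a == f b) ==> (a == b)],
      [forall a in A, f a \in Hol B] &
      [forall x in B, forall y in B, #|[set a in A | f a x == y]| == 1%N]].

Definition reg_embs (A : {set gT}) (B : {set hT}) : {set {ffun gT -> {perm hT}}} :=
  [set f | regular_embedding A B f].

Definition conj_emb (f : {ffun gT -> {perm hT}}) (s : {perm hT}) :
    {ffun gT -> {perm hT}} := [ffun a => f a ^ s].

Definition emb_class (A : {set gT}) (B : {set hT}) (f : {ffun gT -> {perm hT}}) :=
  [set f' in reg_embs A B | [exists s in Aut B, f' == conj_emb f s]].

Definition e_HG (A : {set gT}) (B : {set hT}) : nat :=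
  #|[set emb_class A B f | f in reg_embs A B]|.

End Hopf.

From mathcomp Require Import all_boot all_fingroup all_solvable.
Set Implicit Arguments. Unset Strict Implicit. Unset Printing Implicit Defensive.
Import GroupScope.
Local Open Scope group_scope.

(* Write Gam = A x B and G = C x D with A, C pi-groups and B, D pi'-groups
   (for nilpotent groups: a Sylow p-subgroup and the p'-core).  For h in
   Hol(G) the pi-part of h x depends only on the pi-part of x, and likewise
   for pi'-parts, so Hol(G) = Hol(C) x Hol(D) and Aut(G) = Aut(C) x Aut(D).
   If be : Gam -> Hol(G) is regular, its projection u to Hol(C) kills B: the
   stabiliser of 1 under u is mapped bijectively onto D by g |-> be g 1, so
   it is a pi'-subgroup of order |D| = |B|, hence B itself; B being normal,
   it then fixes the whole u-orbit C of 1.  Thus be is the product of regular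
   embeddings A -> Hol(C) and B -> Hol(D), conjugacy under Aut(G) splits
   componentwise, and e(Gam, G) = e(A, C) e(B, D).  Induction on the primes
   dividing |Gam| gives the product formula. *)

Definition hall_dprod (T : finGroupType) (pi : nat_pred) (K C D : {set T}) :=
  [/\ C \x D = K, pi.-group C & pi^'.-group D].

Lemma constt_eq (T : finGroupType) (pi : nat_pred) (x y : T) :
  x.`_pi = y.`_pi -> x.`_pi^' = y.`_pi^' -> x = y.
Proof. by move=> eq_pi eq_pi'; rewrite -(consttC pi x) -(consttC pi y) eq_pi eq_pi'. Qed.

Lemma group_constt (T : finGroupType) (G : {group T}) pi x : x \in G -> x.`_pi \in G.
Proof. by move=> Gx; apply: subsetP (cycle_constt pi x); rewrite cycle_subG. Qed.

Section HallDprod.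
Variables (T : finGroupType) (pi : nat_pred) (K C D : {group T}).
Hypothesis hK : hall_dprod pi K C D.

Lemma hall_dprodC : hall_dprod pi^' K D C.
Proof. by case: hK => defK piC piD; split; rewrite 1?dprodC ?pgroupNK. Qed.

Lemma hall_dprod_subl : C \subset K.
Proof. by case: hK => /dprodP[_ <- _ _] _ _; apply: mulG_subl. Qed.

Lemma hall_dprod_subr : D \subset K.
Proof. by case: hK => /dprodP[_ <- _ _] _ _; apply: mulG_subr. Qed.

Lemma hall_dprod_commute c d : c \in C -> d \in D -> commute c d.
Proof.
case: hK => /dprodP[_ _ cCD _] _ _ Cc Dd.
exact/esym/(centP (subsetP cCD d Dd)).
Qed.

Lemma constt_idl c : c \in C -> c.`_pi = c.
Proof. by case: hK => _ piC _ Cc; apply/constt_p_elt/(mem_p_elt piC Cc). Qed.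

Lemma constt1l c : c \in C -> c.`_pi^' = 1.
Proof. by case: hK => _ piC _ Cc; apply/constt1P; rewrite p_eltNK (mem_p_elt piC Cc). Qed.

Lemma constt1r d : d \in D -> d.`_pi = 1.
Proof. by case: hK => _ _ piD Dd; apply/constt1P/(mem_p_elt piD Dd). Qed.

Lemma constt_idr d : d \in D -> d.`_pi^' = d.
Proof. by case: hK => _ _ piD Dd; apply/constt_p_elt/(mem_p_elt piD Dd). Qed.

Lemma constt_dprodl c d : c \in C -> d \in D -> (c * d).`_pi = c.
Proof.
move=> Cc Dd; rewrite consttM; last exact: hall_dprod_commute.
by rewrite constt_idl // constt1r ?mulg1.
Qed.

Lemma constt_dprodr c d : c \in C -> d \in D -> (c * d).`_pi^' = d.
Proof.
move=> Cc Dd; rewrite consttM; last exact: hall_dprod_commute.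
by rewrite constt1l // constt_idr ?mul1g.
Qed.

Lemma hall_dprod_mem x : x \in K -> exists2 c, c \in C & exists2 d, d \in D & x = c * d.
Proof.
by case: hK => /dprodP[_ <- _ _] _ _ /mulsgP[c d Cc Dd ->]; exists c => //; exists d.
Qed.

Lemma mem_consttl x : x \in K -> x.`_pi \in C.
Proof. by case/hall_dprod_mem=> c Cc [d Dd ->]; rewrite constt_dprodl. Qed.

Lemma mem_consttr x : x \in K -> x.`_pi^' \in D.
Proof. by case/hall_dprod_mem=> c Cc [d Dd ->]; rewrite constt_dprodr. Qed.

Lemma hall_dprod_mulgACA c d c' d' : c' \in C -> d \in D ->
  (c * d) * (c' * d') = (c * c') * (d * d').
Proof. by move=> Cc' Dd; rewrite !mulgA -(mulgA c) -(hall_dprod_commute Cc' Dd) mulgA. Qed.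

Lemma consttMl x y : x \in K -> y \in K -> (x * y).`_pi = x.`_pi * y.`_pi.
Proof.
case/hall_dprod_mem=> c Cc [d Dd ->]; case/hall_dprod_mem=> c' Cc' [d' Dd' ->].
by rewrite hall_dprod_mulgACA // !constt_dprodl ?groupM.
Qed.

Lemma consttMr x y : x \in K -> y \in K -> (x * y).`_pi^' = x.`_pi^' * y.`_pi^'.
Proof.
case/hall_dprod_mem=> c Cc [d Dd ->]; case/hall_dprod_mem=> c' Cc' [d' Dd' ->].
by rewrite hall_dprod_mulgACA // !constt_dprodr ?groupM.
Qed.

Lemma mem_hall_dprodl x : x \in K -> (x \in C) = (x.`_pi^' == 1).
Proof.
move=> Kx; apply/idP/eqP => [/constt1l // | x_pi'1].
by rewrite -(consttC pi x) x_pi'1 mulg1 mem_consttl.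
Qed.

Lemma mem_hall_dprodr x : x \in K -> (x \in D) = (x.`_pi == 1).
Proof.
move=> Kx; apply/idP/eqP => [/constt1r // | x_pi1].
by rewrite -(consttC pi x) x_pi1 mul1g mem_consttr.
Qed.

End HallDprod.

Section Holomorph.
Variable T : finGroupType.
Implicit Types (B : {group T}) (h s : {perm T}).

Lemma HolP (B : {set T}) h :
  reflect ({in ~: B, forall x, h x = x} /\
           exists2 g, g \in B & exists2 s, s \in Aut B & {in B, forall x, h x = s (x * g^-1)})
          (h \in Hol B).
Proof.
rewrite inE; apply: (iffP andP) => [[/forall_inP fixh] | [fixh [g Bg [s As hE]]]].
  case/exists_inP=> g Bg /exists_inP[s As /forall_inP hE].
  by split=> [x /fixh/eqP | ]; last by exists g => //; exists s => // x /hE/eqP.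
split; first by apply/forall_inP=> x /fixh ->.
apply/exists_inP; exists g => //; apply/exists_inP; exists s => //.
by apply/forall_inP=> x /hE ->.
Qed.

Lemma Hol_perm_on B h : h \in Hol B -> perm_on B h.
Proof.
case/HolP=> fixh _; apply/subsetP=> x; rewrite inE; apply: contraR => Bx.
by rewrite fixh ?inE.
Qed.

Lemma Aut_perm_on (B : {set T}) s : s \in Aut B -> perm_on B s.
Proof. by case/setIdP. Qed.

Lemma Aut_Hol B s : s \in Aut B -> s \in Hol B.
Proof.
move=> As; apply/HolP; split=> [x | ]; first by rewrite inE => /out_Aut->.
by exists 1 => //; exists s => // x _; rewrite invg1 mulg1.
Qed.

Lemma Aut_constt B s pi x : s \in Aut B -> x \in B -> s x.`_pi = (s x).`_pi.
Proof. by move=> As Bx; rewrite -!(autmE As) morph_constt. Qed.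

End Holomorph.

Section HolDprod.
Variables (T : finGroupType) (pi : nat_pred) (G C D : {group T}).
Hypothesis hG : hall_dprod pi G C D.

Lemma Hol_consttl (h : {perm T}) x : h \in Hol G -> x \in G -> (h x).`_pi = (h x.`_pi).`_pi.
Proof.
case/HolP=> _ [g Gg [s As hE]] Gx; have Gx_pi := group_constt pi Gx.
rewrite !hE // -!(Aut_constt _ As) ?groupM ?groupV //.
by rewrite !(consttMl hG) ?groupV // (constt_p_elt (p_elt_constt pi x)).
Qed.

Lemma Aut_dprodl (s : {perm T}) c : s \in Aut G -> c \in C -> s c \in C.
Proof.
move=> As Cc; have Gc := subsetP (hall_dprod_subl hG) c Cc.
rewrite (mem_hall_dprodl hG) ?Aut_closed // -(Aut_constt _ As) // (constt1l hG Cc).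
by rewrite -(autmE As) morph1.
Qed.

End HolDprod.

Lemma perm_onJ (T : finType) (S : {set T}) (h s : {perm T}) :
  perm_on S h -> perm_on S s -> perm_on S (h ^ s).
Proof. by move=> onSh onSs; rewrite /conjg !perm_onM ?perm_onV. Qed.

(* The identity permutation when [f] is not injective. *)
Definition perm_of_fun (T : finType) (f : T -> T) : {perm T} :=
  insubd (1 : {perm T}) (finfun f).

Lemma perm_of_fun_eq (T : finType) (f : T -> T) (h : {perm T}) : f =1 h -> perm_of_fun f = h.
Proof.
move=> fh; rewrite /perm_of_fun (_ : finfun f = pval h) ?valKd //.
by apply/ffunP=> x; rewrite ffunE fh pvalE.
Qed.

Lemma perm_of_funE (T : finType) (f : T -> T) : injective f -> perm_of_fun f =1 f.
Proof.
by move=> injf x; rewrite (@perm_of_fun_eq _ f (perm injf)) ?permE // => y; rewrite permE.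
Qed.

Lemma injective_if_mem (T : finType) (A : {set T}) (f : T -> T) :
  {in A, forall x, f x \in A} -> {in A &, injective f} ->
  injective (fun x => if x \in A then f x else x).
Proof.
move=> fA injf y z; case: ifP => Ay; case: ifP => Az; first exact: injf.
- by move=> eq_fyz; move: (fA y Ay); rewrite eq_fyz Az.
- by move=> eq_yfz; move: (fA z Az); rewrite -eq_yfz Ay.
- by [].
Qed.

Definition dprod_perm (T : finGroupType) pi (G : {set T}) (h1 h2 : {perm T}) : {perm T} :=
  perm_of_fun (fun x => if x \in G then h1 x.`_pi * h2 x.`_pi^' else x).

Definition proj_perm (T : finGroupType) pi (C : {set T}) (h : {perm T}) : {perm T} :=
  perm_of_fun (fun x => if x \in C then (h x).`_pi else x).

Section HallPerm.
Variables (T : finGroupType) (pi : nat_pred) (G C D : {group T}).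
Hypothesis hG : hall_dprod pi G C D.
Implicit Types h k s : {perm T}.

Let subCG x : x \in C -> x \in G := subsetP (hall_dprod_subl hG) x.
Let subDG x : x \in D -> x \in G := subsetP (hall_dprod_subr hG) x.

Section Components.
Variables h1 h2 : {perm T}.
Hypotheses (onC1 : perm_on C h1) (onD2 : perm_on D h2).

Let memC1 x : x \in G -> h1 x.`_pi \in C.
Proof. by move=> Gx; rewrite perm_closed ?(mem_consttl hG). Qed.

Let memD2 x : x \in G -> h2 x.`_pi^' \in D.
Proof. by move=> Gx; rewrite perm_closed ?(mem_consttr hG). Qed.

Lemma dprod_permE x :
  dprod_perm pi G h1 h2 x = if x \in G then h1 x.`_pi * h2 x.`_pi^' else x.
Proof.
rewrite /dprod_perm perm_of_funE //; apply: injective_if_mem => [y Gy | y z Gy Gz eq_yz].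
  by rewrite groupM ?(subCG (memC1 Gy)) ?(subDG (memD2 Gy)).
apply: (constt_eq (pi := pi)); [apply: (@perm_inj _ h1) | apply: (@perm_inj _ h2)].
  by have := congr1 (constt^~ pi) eq_yz; rewrite /= !(constt_dprodl hG) ?memC1 ?memD2.
by have := congr1 (constt^~ pi^') eq_yz; rewrite /= !(constt_dprodr hG) ?memC1 ?memD2.
Qed.

Lemma perm_on_dprod_perm : perm_on G (dprod_perm pi G h1 h2).
Proof.
by apply/subsetP=> x; rewrite inE dprod_permE; case: ifP => // _; rewrite eqxx.
Qed.

Lemma consttl_dprod_perm x : x \in G -> (dprod_perm pi G h1 h2 x).`_pi = h1 x.`_pi.
Proof. by move=> Gx; rewrite dprod_permE Gx (constt_dprodl hG) ?memC1 ?memD2. Qed.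

Lemma consttr_dprod_perm x : x \in G -> (dprod_perm pi G h1 h2 x).`_pi^' = h2 x.`_pi^'.
Proof. by move=> Gx; rewrite dprod_permE Gx (constt_dprodr hG) ?memC1 ?memD2. Qed.

Lemma proj_dprod_perml : proj_perm pi C (dprod_perm pi G h1 h2) = h1.
Proof.
apply: perm_of_fun_eq => x; case: ifP => Cx; last by rewrite (out_perm onC1) ?Cx.
by rewrite consttl_dprod_perm ?subCG // (constt_idl hG Cx).
Qed.

Lemma proj_dprod_permr : proj_perm pi^' D (dprod_perm pi G h1 h2) = h2.
Proof.
apply: perm_of_fun_eq => x; case: ifP => Dx; last by rewrite (out_perm onD2) ?Dx.
by rewrite consttr_dprod_perm ?subDG // (constt_idr hG Dx).
Qed.

End Components.

Lemma dprod_permM h1 h2 k1 k2 :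
    perm_on C h1 -> perm_on D h2 -> perm_on C k1 -> perm_on D k2 ->
  dprod_perm pi G h1 h2 * dprod_perm pi G k1 k2 = dprod_perm pi G (h1 * k1) (h2 * k2).
Proof.
move=> onC1 onD2 onC1' onD2'; apply/permP=> x.
have onG := perm_on_dprod_perm onC1 onD2; have onG' := perm_on_dprod_perm onC1' onD2'.
rewrite permM [RHS]dprod_permE ?perm_onM //; case: ifP => Gx; last first.
  by rewrite (out_perm onG') ?(out_perm onG) ?Gx.
rewrite dprod_permE // perm_closed // Gx.
by rewrite consttl_dprod_perm ?consttr_dprod_perm // !permM.
Qed.

Lemma dprod_permJ h1 h2 s1 s2 :
    perm_on C h1 -> perm_on D h2 -> perm_on C s1 -> perm_on D s2 ->
  dprod_perm pi G h1 h2 ^ dprod_perm pi G s1 s2 = dprod_perm pi G (h1 ^ s1) (h2 ^ s2).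
Proof.
move=> onC1 onD2 onCs1 onDs2; apply: (mulgI (dprod_perm pi G s1 s2)).
by rewrite -conjgC !dprod_permM ?perm_onJ // -!conjgC.
Qed.

Lemma dprod_perm_Aut s1 s2 : s1 \in Aut C -> s2 \in Aut D -> dprod_perm pi G s1 s2 \in Aut G.
Proof.
move=> As1 As2; have [onCs1 onDs2] := (Aut_perm_on As1, Aut_perm_on As2).
rewrite inE perm_on_dprod_perm //; apply/morphicP=> x y Gx Gy.
rewrite !dprod_permE // groupM // Gx Gy (consttMl hG) // (consttMr hG) //.
rewrite (morphicP (Aut_morphic As1)) ?(mem_consttl hG) //.
rewrite (morphicP (Aut_morphic As2)) ?(mem_consttr hG) //.
by rewrite [RHS](hall_dprod_mulgACA hG) // perm_closed ?(mem_consttl hG, mem_consttr hG).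
Qed.

Lemma dprod_perm_Hol h1 h2 : h1 \in Hol C -> h2 \in Hol D -> dprod_perm pi G h1 h2 \in Hol G.
Proof.
move=> Hh1 Hh2; have [onC1 onD2] := (Hol_perm_on Hh1, Hol_perm_on Hh2).
case/HolP: Hh1 => _ [g1 Cg1 [s1 As1 h1E]]; case/HolP: Hh2 => _ [g2 Dg2 [s2 As2 h2E]].
have Gg : g1 * g2 \in G by rewrite groupM ?(subCG Cg1) ?(subDG Dg2).
apply/HolP; split=> [x | ]; first by rewrite inE; apply: out_perm; apply: perm_on_dprod_perm.
exists (g1 * g2) => //; exists (dprod_perm pi G s1 s2); first exact: dprod_perm_Aut.
move=> x Gx; rewrite !dprod_permE ?(Aut_perm_on As1) ?(Aut_perm_on As2) //.
rewrite groupM ?groupV // Gx.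
rewrite h1E ?h2E ?(mem_consttl hG, mem_consttr hG) //.
rewrite (consttMl hG) ?(consttMr hG) ?groupV // !consttV.
by rewrite (constt_dprodl hG) ?(constt_dprodr hG).
Qed.

Lemma proj_permE h x : h \in Hol G -> proj_perm pi C h x = if x \in C then (h x).`_pi else x.
Proof.
move=> Hh; have onGh := Hol_perm_on Hh.
rewrite /proj_perm perm_of_funE //; apply: injective_if_mem => [y Cy | y z Cy Cz eq_yz].
  by rewrite (mem_consttl hG) ?perm_closed ?subCG.
apply: (@perm_inj _ h); apply: (constt_eq (pi := pi)) => //.
have hG' := hall_dprodC hG.
by rewrite (Hol_consttl hG' Hh (subCG Cy)) (Hol_consttl hG' Hh (subCG Cz))
   (constt1l hG Cy) (constt1l hG Cz).
Qed.

Lemma perm_on_proj_perm h : h \in Hol G -> perm_on C (proj_perm pi C h).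
Proof.
by move=> Hh; apply/subsetP=> x; rewrite inE proj_permE //; case: ifP => // _; rewrite eqxx.
Qed.

Lemma proj_permM h k : h \in Hol G -> k \in Hol G ->
  proj_perm pi C (h * k) = proj_perm pi C h * proj_perm pi C k.
Proof.
move=> Hh Hk; apply: perm_of_fun_eq => x; rewrite !permM.
case: ifP => Cx.
  have Ghx : h x \in G by rewrite perm_closed ?Hol_perm_on ?subCG.
  by rewrite (proj_permE _ Hh) Cx proj_permE // (mem_consttl hG) // -(Hol_consttl hG).
by rewrite (out_perm (perm_on_proj_perm Hh)) ?(out_perm (perm_on_proj_perm Hk)) ?Cx.
Qed.

Lemma proj_perm_Aut_id s x : s \in Aut G -> x \in C -> proj_perm pi C s x = s x.
Proof.
move=> As Cx; rewrite proj_permE ?Aut_Hol // Cx.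
by rewrite (constt_idl hG) ?(Aut_dprodl hG).
Qed.

Lemma proj_perm_Aut s : s \in Aut G -> proj_perm pi C s \in Aut C.
Proof.
move=> As; rewrite inE perm_on_proj_perm ?Aut_Hol //; apply/morphicP=> x y Cx Cy.
by rewrite !proj_perm_Aut_id ?groupM // -(autmE As) morphM ?subCG.
Qed.

Lemma proj_perm_Hol h : h \in Hol G -> proj_perm pi C h \in Hol C.
Proof.
move=> Hh; have onC := perm_on_proj_perm Hh.
case/HolP: (Hh) => _ [g Gg [s As hE]].
apply/HolP; split=> [x | ]; first by rewrite inE; apply: out_perm.
exists g.`_pi; first exact: (mem_consttl hG).
exists (proj_perm pi C s); first exact: proj_perm_Aut.
move=> x Cx; have Cg' : x * (g.`_pi)^-1 \in C by rewrite groupM ?groupV ?(mem_consttl hG).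
rewrite (proj_perm_Aut_id As Cg') (proj_permE _ Hh) Cx hE ?subCG //.
rewrite -(Aut_constt _ As) ?groupM ?groupV ?(subCG Cx) //.
by rewrite (consttMl hG) ?groupV ?(subCG Cx) // consttV (constt_idl hG Cx).
Qed.

End HallPerm.

Lemma dprod_perm_proj (T : finGroupType) (pi : nat_pred) (G C D : {group T}) h :
    hall_dprod pi G C D -> h \in Hol G ->
  dprod_perm pi G (proj_perm pi C h) (proj_perm pi^' D h) = h.
Proof.
move=> hG Hh; have hG' := hall_dprodC hG.
apply/permP=> x; rewrite (dprod_permE hG) ?(perm_on_proj_perm hG, perm_on_proj_perm hG') //.
case: ifP => Gx; last by rewrite (out_perm (Hol_perm_on Hh)) ?Gx.
rewrite (proj_permE hG) // (proj_permE hG') // (mem_consttl hG) // (mem_consttr hG) //.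
by rewrite -(Hol_consttl hG) // -(Hol_consttl hG') // consttC.
Qed.

Section RegularEmbeddings.
Variables (gT hT : finGroupType).
Implicit Types f : {ffun gT -> {perm hT}}.

Lemma reg_embsP (A : {group gT}) (B : {group hT}) f :
  reflect [/\ {in ~: A, forall a, f a = 1},
              {in A &, {morph f : a b / a * b}},
              {in A, forall a, f a \in Hol B},
              {in B &, forall x y, exists2 a, a \in A & f a x = y} &
              {in B, forall x, {in A &, injective (fun a => f a x)}}]
          (f \in reg_embs A B).
Proof.
rewrite inE; apply: (iffP and5P) => [[/forall_inP f1 /forall_inP fM _ /forall_inP fH] | ].
  move/forall_inP=> fib1; have fibP x y : x \in B -> y \in B ->
      exists a0, [set a in A | f a x == y] = [set a0].
    by move=> Bx By; apply/cards1P/(forall_inP (fib1 x Bx)).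
  split=> [a /f1/eqP // | a b Aa Ab | // | x y Bx By | x Bx a a' Aa Aa' eq_fx].
  - exact/eqP/(forall_inP (fM a Aa)).
  - have [a0 fib] := fibP x y Bx By.
    have /setIdP[Aa0 /eqP] : a0 \in [set a in A | f a x == y] by rewrite fib set11.
    by exists a0.
  have Bfx : f a x \in B by rewrite perm_closed ?Hol_perm_on ?fH.
  have [a0 fib] := fibP x (f a x) Bx Bfx.
  have : a' \in [set b in A | f b x == f a x] by rewrite inE Aa' eq_fx eqxx.
  have : a \in [set b in A | f b x == f a x] by rewrite inE Aa eqxx.
  by rewrite fib !inE => /eqP-> /eqP->.
case=> f1 fM fH ftr ffree; split.
- by apply/forall_inP=> a /f1->.
- by apply/forall_inP=> a Aa; apply/forall_inP=> b Ab; rewrite fM.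
- apply/forall_inP=> a Aa; apply/forall_inP=> b Ab; apply/implyP=> /eqP eq_fab.
  by apply/eqP/(ffree 1) => //=; rewrite eq_fab.
- exact/forall_inP.
apply/forall_inP=> x Bx; apply/forall_inP=> y By; have [a0 Aa0 fa0] := ftr x y Bx By.
apply/cards1P; exists a0; apply/setP=> a; rewrite !inE.
apply/andP/eqP => [[Aa /eqP fa] | ->]; last by rewrite Aa0 fa0.
by apply: (ffree x) => //=; rewrite fa fa0.
Qed.

Lemma reg_emb1 (A : {group gT}) (B : {group hT}) f : f \in reg_embs A B -> f 1 = 1.
Proof.
case/reg_embsP=> _ fM _ _ _; apply: (mulgI (f 1)).
by rewrite -fM ?mulg1.
Qed.

Definition aut_conjugate (B : {set hT}) : rel {ffun gT -> {perm hT}} :=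
  fun f f' => [exists s in Aut B, f' == conj_emb f s].

Lemma e_HGE (A : {set gT}) (B : {set hT}) :
  e_HG A B = #|equivalence_partition (aut_conjugate B) (reg_embs A B)|.
Proof. by []. Qed.

Lemma conj_emb1 f : conj_emb f 1 = f.
Proof. by apply/ffunP=> a; rewrite ffunE conjg1. Qed.

Lemma conj_embM f s t : conj_emb (conj_emb f s) t = conj_emb f (s * t).
Proof. by apply/ffunP=> a; rewrite !ffunE conjgM. Qed.

Lemma aut_conjugate_equiv (B : {group hT}) : equivalence_rel (aut_conjugate B).
Proof.
apply/equivalence_relP; split=> [f | f f' /exists_inP[s As /eqP->] f''].
  by apply/exists_inP; exists 1; rewrite ?group1 ?conj_emb1.
apply/exists_inP/exists_inP=> [[t At /eqP->] | [t At /eqP->]].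
  by exists (s^-1 * t); rewrite ?groupM ?groupV // conj_embM mulKVg.
by exists (s * t); rewrite ?groupM // conj_embM.
Qed.

End RegularEmbeddings.

Section RegularProjection.
Variables (gT hT : finGroupType) (pi : nat_pred).
Variables (Gam A B : {group gT}) (G C D : {group hT}) (be : {ffun gT -> {perm hT}}).
Hypotheses (hGam : hall_dprod pi Gam A B) (hG : hall_dprod pi G C D).
Hypotheses (cardBD : #|B| = #|D|) (reg_be : be \in reg_embs Gam G).

Let beM : {in Gam &, {morph be : a b / a * b}}.
Proof. by case/reg_embsP: reg_be. Qed.

Let beHol : {in Gam, forall g, be g \in Hol G}.
Proof. by case/reg_embsP: reg_be. Qed.

Let beTr : {in G &, forall x y, exists2 g, g \in Gam & be g x = y}.
Proof. by case/reg_embsP: reg_be. Qed.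

Let beFree : {in G, forall x, {in Gam &, injective (fun g => be g x)}}.
Proof. by case/reg_embsP: reg_be. Qed.

Lemma proj_perm_regM : {in Gam &, {morph (fun g => proj_perm pi C (be g)) : g h / g * h}}.
Proof. by move=> g h Gg Gh /=; rewrite beM // (proj_permM hG) ?beHol. Qed.

Lemma proj_perm_reg1 g : g \in Gam -> proj_perm pi C (be g) 1 = (be g 1).`_pi.
Proof. by move=> Gg; rewrite (proj_permE hG) ?beHol ?group1. Qed.

Let S := [set g in Gam | proj_perm pi C (be g) 1 == 1].

Let groupS : group_set S.
Proof.
apply/group_setP; split=> [|g h /setIdP[Gg /eqP ug1] /setIdP[Gh /eqP uh1]].
  by rewrite /S inE group1 /= proj_perm_reg1 // (reg_emb1 reg_be) perm1; apply/eqP/constt1.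
by rewrite /S inE groupM //= proj_perm_regM // permM ug1 uh1.
Qed.

(* [g |-> be g 1] maps [S] onto [D], injectively since [be] is regular. *)
Let card_S : #|S| = #|B|.
Proof.
have DE : D = (fun g => be g 1) @: S :> {set hT}.
  apply/setP=> y; apply/idP/imsetP => [Dy | [g /setIdP[Gg /eqP ug1] ->]].
    have [g Gg gy] := beTr (group1 G) (subsetP (hall_dprod_subr hG) y Dy).
    exists g; last by rewrite gy.
    by rewrite /S inE Gg /= proj_perm_reg1 // gy (constt1r hG Dy).
  rewrite (mem_hall_dprodr hG) -?proj_perm_reg1 ?ug1 //.
  by rewrite perm_closed ?Hol_perm_on ?beHol.
rewrite cardBD DE card_in_imset // => g h /setIdP[Gg _] /setIdP[Gh _].
exact: (beFree (group1 G)).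
Qed.

Let S_B : S = B.
Proof.
have sSB : S \subset B.
  apply/subsetP=> g Sg; have /setIdP[Gg _] := Sg.
  have pi'S : pi^'.-group (group groupS) by rewrite /pgroup /= card_S; case: hGam.
  by rewrite (mem_hall_dprodr hGam) //; apply/eqP/constt1P/(mem_p_elt pi'S).
by apply/eqP; rewrite eqEcard sSB card_S leqnn.
Qed.

Lemma proj_perm_reg_ker b : b \in B -> proj_perm pi C (be b) = 1.
Proof.
move=> Bb; have Gb := subsetP (hall_dprod_subr hGam) b Bb.
apply/permP=> x; rewrite perm1.
have [Cx | notCx] := boolP (x \in C); last first.
  by rewrite (out_perm (perm_on_proj_perm hG (beHol Gb))).
have [g Gg gx] := beTr (group1 G) (subsetP (hall_dprod_subl hG) x Cx).
have ug1 : proj_perm pi C (be g) 1 = x by rewrite proj_perm_reg1 // gx (constt_idl hG Cx).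
have Bbg : b ^ g^-1 \in B.
  case: hGam => /dprod_normal2[_ /normal_norm nBGam] _ _.
  by rewrite memJ_norm // (subsetP nBGam) ?groupV.
have Gbg : b ^ g^-1 \in Gam := subsetP (hall_dprod_subr hGam) _ Bbg.
have ubg1 : proj_perm pi C (be (b ^ g^-1)) 1 = 1 by move: Bbg; rewrite -S_B => /setIdP[_ /eqP].
rewrite -ug1 -permM -proj_perm_regM // conjgCV proj_perm_regM //.
by rewrite permM ubg1.
Qed.

Lemma proj_perm_reg_constt g : g \in Gam -> proj_perm pi C (be g) = proj_perm pi C (be g.`_pi).
Proof.
move=> Gg; rewrite -{1}(consttC pi g) proj_perm_regM ?group_constt //.
by rewrite (proj_perm_reg_ker (mem_consttr hGam Gg)) mulg1.
Qed.

End RegularProjection.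

Lemma equivalence_class_eq (U : finType) (E : {set U}) (Q : rel U) :
  {in E & &, equivalence_rel Q} ->
  {in E &, forall x y, Q x y -> [set z in E | Q x z] = [set z in E | Q y z]}.
Proof.
move=> eqQ x y Ex Ey Qxy; apply/setP=> z; rewrite !inE.
by apply: andb_id2l => Ez; apply: (eqQ x y z Ex Ey Ez).2.
Qed.

Section ProductPartition.
Variables (T T1 T2 : finType) (D : {set T}) (D1 : {set T1}) (D2 : {set T2}).
Variables (R : rel T) (R1 : rel T1) (R2 : rel T2) (pair : T1 -> T2 -> T).
Hypotheses (eqR1 : {in D1 & &, equivalence_rel R1}) (eqR2 : {in D2 & &, equivalence_rel R2}).
Hypotheses (pairD : {in D1 & D2, forall x1 x2, pair x1 x2 \in D})
  (pair_onto : {in D, forall x, exists2 x1, x1 \in D1 & exists2 x2, x2 \in D2 & x = pair x1 x2})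
  (pairR : {in D1 & D2, forall x1 x2, {in D1 & D2, forall y1 y2,
     R (pair x1 x2) (pair y1 y2) = R1 x1 y1 && R2 x2 y2}}).

Let pair_set (K : {set T1} * {set T2}) : {set T} := [set pair y1 y2 | y1 in K.1, y2 in K.2].

Let class_pair x1 x2 : x1 \in D1 -> x2 \in D2 ->
  [set y in D | R (pair x1 x2) y] = pair_set ([set y in D1 | R1 x1 y], [set y in D2 | R2 x2 y]).
Proof.
move=> Dx1 Dx2; apply/setP=> y; rewrite inE; apply/andP/imset2P => [[Dy] | ].
  have [y1 Dy1 [y2 Dy2 ->]] := pair_onto Dy.
  by rewrite pairR // => /andP[R1y1 R2y2]; exists y1 y2; rewrite ?inE ?Dy1 ?Dy2.
case=> y1 y2 /setIdP[Dy1 R1y1] /setIdP[Dy2 R2y2] ->.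
by rewrite pairD // pairR // R1y1 R2y2.
Qed.

Lemma card_equivalence_partition_pair :
  #|equivalence_partition R D| =
    (#|equivalence_partition R1 D1| * #|equivalence_partition R2 D2|)%N.
Proof.
set P1 := equivalence_partition R1 D1; set P2 := equivalence_partition R2 D2.
have -> : equivalence_partition R D = pair_set @: setX P1 P2.
  apply/setP=> K; apply/imsetP/imsetP => [[x Dx ->] | [[K1 K2]]].
    have [x1 Dx1 [x2 Dx2 ->]] := pair_onto Dx.
    exists ([set y in D1 | R1 x1 y], [set y in D2 | R2 x2 y]); last exact: class_pair.
    by rewrite inE; apply/andP; split; apply: imset_f.
  rewrite inE /= => /andP[/imsetP[x1 Dx1 ->] /imsetP[x2 Dx2 ->]] ->.
  by exists (pair x1 x2); rewrite ?pairD ?class_pair.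
rewrite card_in_imset ?cardsX // => -[K1 K2] [L1 L2].
rewrite !inE /= => /andP[/imsetP[x1 Dx1 ->] /imsetP[x2 Dx2 ->]].
move=> /andP[/imsetP[y1 Dy1 ->] /imsetP[y2 Dy2 ->]].
rewrite -!class_pair // => eq_class.
have : pair y1 y2 \in [set y in D | R (pair x1 x2) y].
  by rewrite eq_class inE pairD // pairR // (eqR1 Dy1 Dy1 Dy1).1 (eqR2 Dy2 Dy2 Dy2).1.
rewrite inE pairR // => /andP[_ /andP[R1xy1 R2xy2]].
by rewrite (equivalence_class_eq eqR1 Dx1 Dy1 R1xy1) (equivalence_class_eq eqR2 Dx2 Dy2 R2xy2).
Qed.

End ProductPartition.

Definition dprod_emb (gT hT : finGroupType) pi (Gam : {set gT}) (G : {set hT})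
    (f1 f2 : {ffun gT -> {perm hT}}) : {ffun gT -> {perm hT}} :=
  [ffun g => if g \in Gam then dprod_perm pi G (f1 g.`_pi) (f2 g.`_pi^') else 1].

Definition proj_emb (gT hT : finGroupType) pi (A : {set gT}) (C : {set hT})
    (be : {ffun gT -> {perm hT}}) : {ffun gT -> {perm hT}} :=
  [ffun a => if a \in A then proj_perm pi C (be a) else 1].

Definition perm_family (gT hT : finGroupType) (A : {set gT}) (C : {set hT})
    (f : {ffun gT -> {perm hT}}) :=
  {in ~: A, forall a, f a = 1} /\ {in A, forall a, perm_on C (f a)}.

Lemma reg_emb_family (gT hT : finGroupType) (A : {group gT}) (C : {group hT}) f :
  f \in reg_embs A C -> perm_family A C f.
Proof. by case/reg_embsP=> f1 _ fH _ _; split=> // a /fH/Hol_perm_on. Qed.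

Lemma perm_family_conj (gT hT : finGroupType) (A : {set gT}) (C : {set hT}) f s :
  perm_family A C f -> perm_on C s -> perm_family A C (conj_emb f s).
Proof.
case=> f1 onCf onCs; split=> a Aa; rewrite ffunE; first by rewrite f1 ?conj1g.
by rewrite perm_onJ ?onCf.
Qed.

Section Split.
Variables (gT hT : finGroupType) (pi : nat_pred) (Gam A B : {group gT}) (G C D : {group hT}).
Hypotheses (hGam : hall_dprod pi Gam A B) (hG : hall_dprod pi G C D).
Hypotheses (cardAC : #|A| = #|C|) (cardBD : #|B| = #|D|).
Implicit Types f be : {ffun gT -> {perm hT}}.

Let hGam' : hall_dprod pi^' Gam B A := hall_dprodC hGam.
Let hG' : hall_dprod pi^' G D C := hall_dprodC hG.
Let subAGam a : a \in A -> a \in Gam := subsetP (hall_dprod_subl hGam) a.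
Let subBGam b : b \in B -> b \in Gam := subsetP (hall_dprod_subr hGam) b.
Let subCG c : c \in C -> c \in G := subsetP (hall_dprod_subl hG) c.

Let reg_emb_proj be a c : be \in reg_embs Gam G -> a \in A -> c \in C ->
  be a c = proj_perm pi C (be a) c.
Proof.
move=> reg_be Aa Cc; have [_ _ beH _ _] := reg_embsP _ _ _ reg_be.
have Hbea := beH a (subAGam Aa).
rewrite (proj_permE hG) // Cc -[LHS](consttC pi) (Hol_consttl hG') ?subCG //.
have := proj_permE hG' 1 Hbea; rewrite group1 (proj_perm_reg_ker hGam' hG' cardAC reg_be Aa).
by rewrite perm1 (constt1l hG Cc) => <-; rewrite mulg1.
Qed.

Lemma proj_emb_reg be : be \in reg_embs Gam G -> proj_emb pi A C be \in reg_embs A C.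
Proof.
move=> reg_be; have [_ beM beH beTr beFree] := reg_embsP _ _ _ reg_be.
apply/reg_embsP; split=> [a | a a' Aa Aa' | a Aa | c c' Cc Cc' | c Cc a a' Aa Aa' /=].
- by rewrite inE ffunE => /negbTE->.
- by rewrite !ffunE groupM // Aa Aa' beM ?subAGam // (proj_permM hG) ?beH ?subAGam.
- by rewrite ffunE Aa (proj_perm_Hol hG) ?beH ?subAGam.
- have [g Gg gc] := beTr _ _ (subCG Cc) (subCG Cc').
  exists g.`_pi; first exact: (mem_consttl hGam Gg).
  rewrite ffunE (mem_consttl hGam Gg) -(proj_perm_reg_constt hGam hG cardBD reg_be Gg).
  by rewrite (proj_permE hG) ?beH // Cc gc (constt_idl hG Cc').
rewrite !ffunE Aa Aa' -!reg_emb_proj // => eq_ac.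
exact: (beFree c (subCG Cc) a a' (subAGam Aa) (subAGam Aa') eq_ac).
Qed.

Lemma dprod_emb_reg f1 f2 : f1 \in reg_embs A C -> f2 \in reg_embs B D ->
  dprod_emb pi Gam G f1 f2 \in reg_embs Gam G.
Proof.
move=> reg_f1 reg_f2.
have [_ f1M f1H f1Tr f1Free] := reg_embsP _ _ _ reg_f1.
have [_ f2M f2H f2Tr f2Free] := reg_embsP _ _ _ reg_f2.
have onC1 a : a \in A -> perm_on C (f1 a) by move/f1H/Hol_perm_on.
have onD2 b : b \in B -> perm_on D (f2 b) by move/f2H/Hol_perm_on.
have embE g x : g \in Gam -> x \in G ->
    dprod_emb pi Gam G f1 f2 g x = f1 g.`_pi x.`_pi * f2 g.`_pi^' x.`_pi^'.
  move=> Gg Gx; rewrite ffunE Gg (dprod_permE hG) ?Gx //.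
    exact/onC1/(mem_consttl hGam).
  exact/onD2/(mem_consttr hGam).
apply/reg_embsP; split=> [g | g h Gg Gh | g Gg | x y Gx Gy | x Gx g g' Gg Gg' /=].
- by rewrite inE ffunE => /negbTE->.
- rewrite !ffunE Gg Gh groupM // (consttMl hGam) // (consttMr hGam) //.
  rewrite f1M ?f2M ?(mem_consttl hGam) ?(mem_consttr hGam) //.
  by rewrite (dprod_permM hG) ?onC1 ?onD2 ?(mem_consttl hGam) ?(mem_consttr hGam).
- by rewrite ffunE Gg (dprod_perm_Hol hG) ?f1H ?f2H ?(mem_consttl hGam) ?(mem_consttr hGam).
- have [a Aa ax] := f1Tr _ _ (mem_consttl hG Gx) (mem_consttl hG Gy).
  have [b Bb bx] := f2Tr _ _ (mem_consttr hG Gx) (mem_consttr hG Gy).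
  have Gab : a * b \in Gam by rewrite groupM ?(subAGam Aa) ?(subBGam Bb).
  exists (a * b); rewrite // embE //.
  by rewrite (constt_dprodl hGam) ?(constt_dprodr hGam) // ax bx consttC.
rewrite !embE // => eq_gx.
have memC1 h : h \in Gam -> f1 h.`_pi x.`_pi \in C.
  by move=> Gh; rewrite perm_closed ?onC1 ?(mem_consttl hGam) ?(mem_consttl hG).
have memD2 h : h \in Gam -> f2 h.`_pi^' x.`_pi^' \in D.
  by move=> Gh; rewrite perm_closed ?onD2 ?(mem_consttr hGam) ?(mem_consttr hG).
apply: (constt_eq (pi := pi)).
  apply: (f1Free _ (mem_consttl hG Gx)); rewrite ?(mem_consttl hGam) //=.
  by have := congr1 (constt^~ pi) eq_gx; rewrite /= !(constt_dprodl hG) ?memC1 ?memD2.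
apply: (f2Free _ (mem_consttr hG Gx)); rewrite ?(mem_consttr hGam) //=.
by have := congr1 (constt^~ pi^') eq_gx; rewrite /= !(constt_dprodr hG) ?memC1 ?memD2.
Qed.

Lemma dprod_emb_proj be : be \in reg_embs Gam G ->
  dprod_emb pi Gam G (proj_emb pi A C be) (proj_emb pi^' B D be) = be.
Proof.
move=> reg_be; have [be1 _ beH _ _] := reg_embsP _ _ _ reg_be.
apply/ffunP=> g; rewrite !ffunE; case: ifP => Gg; last by rewrite be1 ?inE ?Gg.
rewrite (mem_consttl hGam Gg) (mem_consttr hGam Gg).
rewrite -(proj_perm_reg_constt hGam hG cardBD reg_be Gg).
rewrite -(proj_perm_reg_constt hGam' hG' cardAC reg_be Gg).
exact: (dprod_perm_proj hG (beH g Gg)).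
Qed.

Lemma proj_dprod_embl f1 f2 : perm_family A C f1 -> perm_family B D f2 ->
  proj_emb pi A C (dprod_emb pi Gam G f1 f2) = f1.
Proof.
case=> f1out onC1 [_ onD2]; apply/ffunP=> a; rewrite !ffunE.
case: ifP => Aa; last by rewrite f1out ?inE ?Aa.
rewrite subAGam // (constt_idl hGam Aa) (constt1l hGam Aa).
by rewrite (proj_dprod_perml hG) ?onC1 ?onD2.
Qed.

Lemma proj_dprod_embr f1 f2 : perm_family A C f1 -> perm_family B D f2 ->
  proj_emb pi^' B D (dprod_emb pi Gam G f1 f2) = f2.
Proof.
case=> _ onC1 [f2out onD2]; apply/ffunP=> b; rewrite !ffunE.
case: ifP => Bb; last by rewrite f2out ?inE ?Bb.
rewrite subBGam // (constt1r hGam Bb) (constt_idr hGam Bb).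
by rewrite (proj_dprod_permr hG) ?onC1 ?onD2.
Qed.

Lemma dprod_embJ f1 f2 s1 s2 : perm_family A C f1 -> perm_family B D f2 ->
    perm_on C s1 -> perm_on D s2 ->
  conj_emb (dprod_emb pi Gam G f1 f2) (dprod_perm pi G s1 s2) =
    dprod_emb pi Gam G (conj_emb f1 s1) (conj_emb f2 s2).
Proof.
case=> _ onC1 [_ onD2] onCs1 onDs2; apply/ffunP=> g; rewrite !ffunE.
case: ifP => Gg; last by rewrite conj1g.
by rewrite (dprod_permJ hG) ?onC1 ?onD2 ?(mem_consttl hGam) ?(mem_consttr hGam).
Qed.

Lemma aut_conjugate_dprod_emb f1 f2 g1 g2 :
    f1 \in reg_embs A C -> f2 \in reg_embs B D ->
    g1 \in reg_embs A C -> g2 \in reg_embs B D ->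
  aut_conjugate G (dprod_emb pi Gam G f1 f2) (dprod_emb pi Gam G g1 g2) =
    aut_conjugate C f1 g1 && aut_conjugate D f2 g2.
Proof.
move=> /reg_emb_family famf1 /reg_emb_family famf2 /reg_emb_family famg1 /reg_emb_family famg2.
apply/exists_inP/andP => [[s As /eqP eq_g] | ].
  have [As1 As2] := (proj_perm_Aut hG As, proj_perm_Aut hG' As).
  have [onCs1 onDs2] := (Aut_perm_on As1, Aut_perm_on As2).
  move: eq_g; rewrite -(dprod_perm_proj hG (Aut_Hol As)) dprod_embJ // => eq_g.
  split; apply/exists_inP; [exists (proj_perm pi C s) | exists (proj_perm pi^' D s)] => //.
    by rewrite -(proj_dprod_embl famg1 famg2) eq_g proj_dprod_embl //; apply: perm_family_conj.
  by rewrite -(proj_dprod_embr famg1 famg2) eq_g proj_dprod_embr //; apply: perm_family_conj.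
case=> /exists_inP[s1 As1 /eqP->] /exists_inP[s2 As2 /eqP->].
exists (dprod_perm pi G s1 s2); first exact: (dprod_perm_Aut hG).
by rewrite dprod_embJ ?Aut_perm_on.
Qed.

End Split.

Theorem e_HG_dprod (gT hT : finGroupType) (pi : nat_pred)
    (Gam A B : {group gT}) (G C D : {group hT}) :
    hall_dprod pi Gam A B -> hall_dprod pi G C D -> #|A| = #|C| -> #|B| = #|D| ->
  e_HG Gam G = (e_HG A C * e_HG B D)%N.
Proof.
move=> hGam hG cardAC cardBD; have [hGam' hG'] := (hall_dprodC hGam, hall_dprodC hG).
rewrite !e_HGE; apply: (card_equivalence_partition_pair (pair := dprod_emb pi Gam G)).
- by move=> f g h _ _ _; apply: aut_conjugate_equiv.
- by move=> f g h _ _ _; apply: aut_conjugate_equiv.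
- exact: dprod_emb_reg hGam hG.
- move=> be reg_be; exists (proj_emb pi A C be).
    exact: (proj_emb_reg hGam hG cardAC cardBD reg_be).
  exists (proj_emb pi^' B D be); last by rewrite (dprod_emb_proj hGam hG cardAC cardBD reg_be).
  exact: (proj_emb_reg hGam' hG' cardBD cardAC reg_be).
- by move=> f1 f2 reg_f1 reg_f2 g1 g2 reg_g1 reg_g2; apply: (aut_conjugate_dprod_emb hGam hG).
Qed.

Lemma e_HG_trivial (gT hT : finGroupType) (Gam : {group gT}) (G : {group hT}) :
  #|Gam| = 1%N -> #|G| = 1%N -> e_HG Gam G = 1%N.
Proof.
move=> /card1_trivg Gam1 /card1_trivg G1.
have regE : reg_embs Gam G = [set [ffun=> 1]].
  apply/setP=> f; rewrite in_set1; apply/idP/eqP => [reg_f | ->].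
    have [f1 _ _ _ _] := reg_embsP _ _ _ reg_f.
    apply/ffunP=> a; rewrite ffunE; have [Gam_a | notGam_a] := boolP (a \in Gam).
      by move: Gam_a; rewrite Gam1 in_set1 => /eqP->; apply: reg_emb1 reg_f.
    by apply: f1; rewrite inE.
  apply/reg_embsP; split=> [a _ | a b _ _ | a _ | x y | x].
  - by rewrite ffunE.
  - by rewrite !ffunE mulg1.
  - by rewrite ffunE Aut_Hol ?group1.
  - by rewrite G1 !in_set1 => /eqP-> /eqP->; exists 1; rewrite ?group1 ?ffunE ?perm1.
  - by rewrite Gam1 => _ a a' /set1P-> /set1P->.
by rewrite /e_HG regE imset_set1 cards1.
Qed.

Section NilpotentSylow.
Variables (T : finGroupType) (Gam : {group T}) (p : nat).
Hypothesis nilGam : nilpotent Gam.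

Lemma nilpotent_hall_dprod (S : {group T}) : p.-Sylow(Gam) S -> hall_dprod p Gam S 'O_p^'(Gam).
Proof.
move=> sylS; split; [|exact: pHall_pgroup sylS | exact: pcore_pgroup].
by rewrite (nilpotent_Hall_pcore nilGam sylS) nilpotent_pcoreC.
Qed.

Lemma card_pcoreN : #|'O_p^'(Gam)| = (#|Gam|`_p^')%N.
Proof. exact/card_Hall/nilpotent_pcore_Hall. Qed.

Lemma primes_pcoreN s : primes #|Gam| = p :: s -> primes #|'O_p^'(Gam)| = s.
Proof.
move=> primesGam; have := primes_uniq #|Gam|; rewrite primesGam /= => /andP[p_s _].
rewrite card_pcoreN primes_part primesGam /= !inE eqxx /=.
by apply/all_filterP/allP=> q s_q; rewrite !inE; apply: contraNneq p_s => <-.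
Qed.

Lemma Sylow_pcoreN q (S : {group T}) : q != p -> S \in 'Syl_q(Gam) -> S \in 'Syl_q('O_p^'(Gam)).
Proof.
rewrite !inE => q'p sylS; apply: (pHall_subl _ (pcore_sub _ _) sylS).
rewrite (sub_normal_Hall (nilpotent_pcore_Hall _ nilGam)) ?pcore_normal ?(pHall_sub sylS) //.
by apply: pi_pnat (pHall_pgroup sylS) _; rewrite !inE.
Qed.

End NilpotentSylow.

Lemma e_HG_nilpotent (gT hT : finGroupType) (GamS : nat -> {group gT}) (GS : nat -> {group hT}) s :
  forall (Gam : {group gT}) (G : {group hT}),
    primes #|Gam| = s -> nilpotent Gam -> nilpotent G -> #|Gam| = #|G| ->
    {in s, forall p, GamS p \in 'Syl_p(Gam)} -> {in s, forall p, GS p \in 'Syl_p(G)} ->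
  e_HG Gam G = (\prod_(p <- s) e_HG (GamS p) (GS p))%N.
Proof.
elim: s => [|p s IHs] Gam G primesGam nilGam nilG cardGam sylGam sylG.
  have Gam1 : #|Gam| = 1%N.
    by apply/eqP; rewrite eqn_leq cardG_gt0 andbT -ltnS -primes_eq0 primesGam.
  by rewrite big_nil e_HG_trivial // -cardGam.
have /andP[p'_s _] : uniq (p :: s) by rewrite -primesGam primes_uniq.
have q'p q : q \in s -> q != p by apply: contraTneq => ->.
move: (sylGam p (mem_head p s)) (sylG p (mem_head p s)); rewrite !inE => sylGamp sylGp.
have cardSyl : #|GamS p| = #|GS p| by rewrite (card_Hall sylGamp) (card_Hall sylGp) cardGam.
have cardN : #|'O_p^'(Gam)| = #|'O_p^'(G)| by rewrite !card_pcoreN // cardGam.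
rewrite big_cons (e_HG_dprod (nilpotent_hall_dprod nilGam sylGamp)
  (nilpotent_hall_dprod nilG sylGp) cardSyl cardN).
congr (_ * _)%N; apply: IHs => // [|||q s_q|q s_q].
- exact: primes_pcoreN.
- exact: nilpotentS (pcore_sub _ _) nilGam.
- exact: nilpotentS (pcore_sub _ _) nilG.
- by apply: Sylow_pcoreN (q'p q s_q) _; rewrite ?sylGam ?inE ?s_q ?orbT.
- by apply: Sylow_pcoreN (q'p q s_q) _; rewrite ?sylG ?inE ?s_q ?orbT.
Qed.

Unset Implicit Arguments.
Theorem theorem1 (gT hT : finGroupType) (Gam : {group gT}) (G : {group hT})
    (GamS : nat -> {group gT}) (GS : nat -> {group hT}) :
  nilpotent Gam -> nilpotent G -> #|Gam| = #|G| ->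
  (forall p, p \in primes #|Gam| -> GamS p \in 'Syl_p(Gam)) ->
  (forall p, p \in primes #|G| -> GS p \in 'Syl_p(G)) ->
  e_HG Gam G = (\prod_(p <- primes #|Gam|) e_HG (GamS p) (GS p))%N.
Proof.
move=> nilGam nilG cardGam sylGam sylG.
apply: e_HG_nilpotent => // p; rewrite cardGam; exact: sylG.
Qed.
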